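(* Let $n>0$, $c>1$, and $k=\frac{cn}{c^2-1}$. Consider the algorithm in which each agent walks clockwise until it has travelled $k$ units of distance, and then (if rendezvous has not yet occurred) reverses and walks anti-clockwise forever. In the no-communication setting, for every initial placement of the two agents, they rendezvous by time $\frac{cn}{c^2-1}$. Hence the optimal rendezvous time without communication is exactly $\frac{cn}{c^2-1}$.
   Context: Model: the cycle is the continuous circle $\mathbb{R}/n\mathbb{Z}$ of length $n$; it is anonymous. Two agents $A$ and $B$ are placed by an adversary at arbitrary initial points and start at the same time. Both run the same deterministic algorithm; they are identical except that the slower agent $B$ has speed $1$ and the faster agent $A$ has speed $c>1$ (an agent does not know which one it is). Both know $n$ and $c$, share a sense of direction (clockwise vs. anti-clockwise), and have a pedometer measuring the distance they have travelled. Agents detect each other when they are at the same point (rendezvous). No-communication setting: the agents cannot observe anything other than the other agent being at their current location. The rendezvous time of an algorithm is the worst case, over all initial placements, of the time until the agents are co-located; the lower bound $\frac{cn}{c^2-1}$ on it holds for every algorithm in this setting. *)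

From Stdlib Require Import Reals Lra ZArith.
Open Scope R_scope.

(* Points of the cycle R/nZ are represented by reals; two reals denote the
   same point of the cycle of length n iff they differ by an integer multiple of n. *)
Definition same_point (n x y : R) : Prop :=
  exists m : Z, x = y + IZR m * n.

(* Signed displacement (clockwise = positive direction) of an agent running
   the algorithm "walk clockwise for k units of distance, then reverse and walk
   anti-clockwise forever", as a function of the distance d >= 0 travelled
   (read off the pedometer). *)
Definition displacement (k d : R) : R :=
  if Rle_dec d k then d else 2 * k - d.

Definition position (k v p t : R) : R := p + displacement k (v * t).

Definition turn_dist (n c : R) : R := c * n / (c ^ 2 - 1).

From Stdlib Require Import Reals Lra.
Open Scope R_scope.

(* Write k = cn/(c^2-1) and d = pA - pB.  During the time
   window [k/c, k] the fast agent A has already turned (it travelled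
   c t >= k) while the slow agent B still walks clockwise (t <= k), so the
   signed gap  position_A - position_B = d + 2k - (c+1) t  decreases
   linearly from d + (c-1)k/c to d - (c-1)k.  The identity (c^2-1)k = cn
   says that this range has length exactly n, hence it contains an integer
   multiple of n; at the corresponding time the agents are at the same
   point of the cycle. *)

Lemma displacement_before_turn (k d : R) :
  d <= k -> displacement k d = d.
Proof. unfold displacement; destruct (Rle_dec d k); lra. Qed.

Lemma displacement_after_turn (k d : R) :
  k <= d -> displacement k d = 2 * k - d.
Proof. unfold displacement; destruct (Rle_dec d k); lra. Qed.

Lemma multiple_in_interval (a n : R) :
  0 < n -> exists m : Z, a <= IZR m * n <= a + n.
Proof.
  intros hn.
  destruct (archimed (a / n)) as [Hup_gt Hup_le].
  exists (up (a / n)).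
  assert (Ha : a = a / n * n) by (field; lra).
  split.
  - rewrite Ha at 1. apply Rmult_le_compat_r; lra.
  - replace (a + n) with ((a / n + 1) * n) by (field; lra).
    apply Rmult_le_compat_r; lra.
Qed.

Section Rendezvous.

Variables n c : R.
Hypothesis hn : 0 < n.
Hypothesis hc : 1 < c.

Let k := turn_dist n c.

Lemma turn_dist_eq : (c - 1) * (c + 1) * k = c * n.
Proof. unfold k, turn_dist. field. nra. Qed.

Lemma turn_dist_pos : 0 < k.
Proof. unfold k, turn_dist. apply Rdiv_lt_0_compat; nra. Qed.

(* On [k/c, k] the gap d + 2k - (c+1)t sweeps a range of length
   (c-1)k/c + (c-1)k, which equals the cycle length n. *)
Lemma swept_range_length : (c - 1) * k / c + (c - 1) * k = n.
Proof.
  apply (Rmult_eq_reg_l c); [|lra].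
  field_simplify; [|lra].
  pose proof turn_dist_eq. nra.
Qed.

Lemma gap_after_fast_turn (pA pB t : R) :
  k / c <= t <= k ->
  position k c pA t - position k 1 pB t = pA - pB + 2 * k - (c + 1) * t.
Proof.
  intros [Hlo Hhi].
  assert (HcT : k <= c * t).
  { apply (Rmult_le_compat_l c) in Hlo; [|lra].
    replace (c * (k / c)) with k in Hlo by (field; lra). exact Hlo. }
  unfold position.
  rewrite displacement_after_turn by exact HcT.
  rewrite displacement_before_turn by lra.
  ring.
Qed.

Lemma gap_attains (pA pB x : R) :
  pA - pB - (c - 1) * k <= x <= pA - pB + (c - 1) * k / c ->
  exists t, k / c <= t <= k /\
    position k c pA t - position k 1 pB t = x.
Proof.
  intros [Hlo Hhi].
  pose proof turn_dist_pos as Hk.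
  set (t := (pA - pB + 2 * k - x) / (c + 1)).
  assert (Ht : (c + 1) * t = pA - pB + 2 * k - x) by (unfold t; field; lra).
  assert (Hkc : (c + 1) * (k / c) = 2 * k - (c - 1) * k / c) by (field; lra).
  assert (Hbounds : k / c <= t <= k).
  { split; apply (Rmult_le_reg_l (c + 1)); lra. }
  exists t. split; [exact Hbounds|].
  rewrite gap_after_fast_turn by exact Hbounds. lra.
Qed.

End Rendezvous.

Theorem theorem1 (n c : R) (hn : 0 < n) (hc : 1 < c) (pA pB : R) :
  exists t : R, 0 <= t <= turn_dist n c /\
    same_point n (position (turn_dist n c) c pA t)
                 (position (turn_dist n c) 1 pB t).
Proof.
  set (k := turn_dist n c).
  set (a := pA - pB - (c - 1) * k).
  destruct (multiple_in_interval a n hn) as [m Hm].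
  pose proof (swept_range_length n c hc) as Hlen.
  destruct (gap_attains n c hn hc pA pB (IZR m * n)) as [t [Ht Hgap]];
    [fold k in Hlen |- *; unfold a in Hm; lra|].
  fold k in Ht, Hgap.
  assert (Hk : 0 < k) by exact (turn_dist_pos n c hn hc).
  assert (Hkc : 0 < k / c) by (apply Rdiv_lt_0_compat; lra).
  exists t. split; [lra|].
  exists m. lra.
Qed.
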